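(* Let $\kappa>0$, $u_0>0$, and let $u=u(r;u_0)$ be the solution of $$\frac{d}{dr}\Big(\frac{u'}{\sqrt{1+u'^2}}\Big)=\kappa u,\qquad u(0)=u_0,\ u'(0)=0,$$ on its maximal interval $[0,R)$. Let $0<a\le R$ and $0\le\gamma<\pi/2$ be such that the surface $z=u(x)$ meets the vertical wall $x=a$ with contact angle $\gamma$, i.e. $\sin\psi(a)=\cos\gamma$ where $\sin\psi=u'/\sqrt{1+u'^2}$ (extended continuously to $r=a$). Then $$q:=u(a)-u(0)=\frac{\frac2\kappa(1-\sin\gamma)}{u_0+\sqrt{u_0^2+\frac2\kappa(1-\sin\gamma)}}<\sqrt{\frac2\kappa(1-\sin\gamma)}.$$
   Context: The function $u$ is the profile of a $\kappa$-cylindrical surface (capillary surface $z=u(x)$ translation invariant in $y$) over the strip $|x|<a$ between two vertical plates; $\psi$ is the inclination angle of the graph of $u$. On $[0,R)$, $u$ is increasing and $u'\to\infty$ as $r\to R$ (so $\gamma=0$ corresponds to $a=R$). *)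

From Stdlib Require Import Reals.
From Coquelicot Require Import Coquelicot.
Open Scope R_scope.

Definition sinpsi (du : R -> R) (r : R) : R := du r / sqrt (1 + du r ^ 2).

(** The quantity [kappa/2 u^2 + cos psi] is a first integral of the equation:
    differentiating [cos psi = sqrt (1 - sin^2 psi)] and using
    [(sin psi)' = kappa u] and [sin psi / cos psi = u'] cancels [kappa u u'].
    Its limit at [r = 0+] gives [u^2 = u0^2 + 2/kappa (1 - cos psi) >= u0^2],
    so [u] never vanishes and stays positive.  At the wall [cos psi = sin gamma],
    so [u(a) = sqrt (u0^2 + c)], and rationalising [sqrt (u0^2 + c) - u0]
    gives the formula for [q]. *)

From Stdlib Require Import Reals Lra.
From Coquelicot Require Import Coquelicot.
Open Scope R_scope.

Lemma one_minus_sinpsi_sq (du : R -> R) (r : R) :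
  1 - sinpsi du r ^ 2 = / (1 + du r ^ 2).
Proof.
  assert (Hp : 0 < 1 + du r ^ 2) by nra.
  unfold sinpsi, Rdiv. rewrite Rpow_mult_distr, pow_inv, pow2_sqrt by lra.
  field. lra.
Qed.

Lemma sinpsi_sq_lt_1 (du : R -> R) (r : R) : sinpsi du r ^ 2 < 1.
Proof.
  assert (H := one_minus_sinpsi_sq du r).
  assert (0 < / (1 + du r ^ 2)) by (apply Rinv_0_lt_compat; nra).
  lra.
Qed.

Lemma sqrt_1_minus_sinpsi_sq (du : R -> R) (r : R) :
  sqrt (1 - sinpsi du r ^ 2) = / sqrt (1 + du r ^ 2).
Proof. now rewrite one_minus_sinpsi_sq, sqrt_inv. Qed.

Lemma continuous_sqrt_1_minus_sq (y : R) :
  continuous (fun z => sqrt (1 - z ^ 2)) y.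
Proof.
  apply (continuous_sqrt_comp (fun z => 1 - z ^ 2)).
  apply (@ex_derive_continuous R_AbsRing R_NormedModule). auto_derive. auto.
Qed.

Lemma filterlim_sinpsi (F : (R -> Prop) -> Prop) {FF : Filter F} (du : R -> R) :
  filterlim du F (locally 0) -> filterlim (sinpsi du) F (locally 0).
Proof.
  intros Hdu.
  assert (Hcont : continuous (fun x => x / sqrt (1 + x ^ 2)) 0).
  { apply (@ex_derive_continuous R_AbsRing R_NormedModule). auto_derive.
    rewrite Rmult_0_l, Rplus_0_r, sqrt_1. lra. }
  replace (locally 0) with (locally (0 / sqrt (1 + 0 ^ 2))) by (f_equal; unfold Rdiv; ring).
  exact (filterlim_comp _ _ _ du (fun x => x / sqrt (1 + x ^ 2)) F _ _ Hdu Hcont).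
Qed.

Lemma eq_of_eventually_eq_lim {T : Type} {F : (T -> Prop) -> Prop} {FF : ProperFilter F}
  (f : T -> R) (K C : R) :
  F (fun x => f x = K) -> filterlim f F (locally C) -> K = C.
Proof.
  intros HK HC.
  apply (filterlim_locally_unique (F := F) (fun _ => K)); [apply filterlim_const |].
  apply filterlim_ext_loc with (f := f); [| exact HC].
  exact (filter_imp _ _ (fun x (h : f x = K) => h) HK).
Qed.

Lemma at_right_interval (x r : R) : x < r -> at_right x (fun t => x < t < r).
Proof.
  intros Hxr. unfold at_right, within. apply (filter_imp (fun t => t < r)); [| exact (open_lt r x Hxr)].
  intros t Ht Hxt. lra.
Qed.

Lemma at_left_interval (x r : R) : r < x -> at_left x (fun t => r < t < x).
Proof.
  intros Hrx. unfold at_left, within. apply (filter_imp (fun t => r < t)); [| exact (open_gt r x Hrx)].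
  intros t Ht Htx. lra.
Qed.

Lemma const_of_derive_0 (f : R -> R) (a b : R) :
  (forall t, a < t < b -> is_derive f t 0) ->
  forall r1 r2, a < r1 < b -> a < r2 < b -> f r1 = f r2.
Proof.
  intros Hd r1 r2 H1 H2.
  destruct (Rtotal_order r1 r2) as [Hlt | [-> | Hgt]]; [| reflexivity |].
  - apply eq_is_derive; [intros t Ht; apply Hd; lra | lra].
  - symmetry. apply eq_is_derive; [intros t Ht; apply Hd; lra | lra].
Qed.

Lemma pos_of_nonvanishing (f : R -> R) (b l : R) :
  (forall t, 0 < t < b -> continuity_pt f t) ->
  (forall t, 0 < t < b -> f t <> 0) ->
  filterlim f (at_right 0) (locally l) -> 0 < l ->
  forall r, 0 < r < b -> 0 < f r.
Proof.
  intros Hcont Hnz Hlim Hl r Hr.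
  destruct (Rlt_or_le 0 (f r)) as [Hpos | Hle]; [exact Hpos | exfalso].
  assert (Hnear : at_right 0 (fun t => 0 < t < r /\ 0 < f t)).
  { apply filter_and; [apply at_right_interval; lra |].
    apply (filter_imp (fun y => Rabs (f y - l) < l)).
    - intros y Hy. apply Rabs_def2 in Hy. lra.
    - exact (proj1 (filterlim_locally _ _) Hlim (mkposreal l Hl)). }
  destruct (filter_ex _ Hnear) as [t [Ht Hft]].
  destruct (Ranalysis5.IVT_interv (fun x => - f x) t r) as [z [Hz Hfz]];
    [intros y Hy; apply continuity_pt_opp, Hcont; lra | lra | lra |
     assert (f r <> 0) by (apply Hnz; lra); lra |].
  apply (Hnz z); lra.
Qed.

Definition height (kappa u0 y : R) : R :=
  sqrt (u0 ^ 2 + 2 / kappa * (1 - sqrt (1 - y ^ 2))).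

Lemma continuous_height (kappa u0 y : R) : continuous (height kappa u0) y.
Proof.
  apply (continuous_sqrt_comp (fun y => u0 ^ 2 + 2 / kappa * (1 - sqrt (1 - y ^ 2)))).
  apply (continuous_comp (fun y => sqrt (1 - y ^ 2)) (fun z => u0 ^ 2 + 2 / kappa * (1 - z))).
  - apply continuous_sqrt_1_minus_sq.
  - apply (@ex_derive_continuous R_AbsRing R_NormedModule). auto_derive. auto.
Qed.

Lemma sin_acute_bounds (gamma : R) : 0 <= gamma < PI / 2 -> 0 <= sin gamma < 1.
Proof.
  intros Hg. assert (HPI := PI_RGT_0). split.
  - apply sin_ge_0; lra.
  - rewrite <- sin_PI2. apply sin_increasing_1; lra.
Qed.

Lemma height_cos (kappa u0 gamma : R) : 0 <= gamma < PI / 2 ->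
  height kappa u0 (cos gamma) = sqrt (u0 ^ 2 + 2 / kappa * (1 - sin gamma)).
Proof.
  intros Hg. unfold height.
  assert (Hs := sin2_cos2 gamma). unfold Rsqr in Hs.
  replace (1 - cos gamma ^ 2) with (sin gamma ^ 2) by (simpl; lra).
  rewrite sqrt_pow2 by (apply sin_acute_bounds; exact Hg). reflexivity.
Qed.

Lemma sqrt_sq_add_sub (u0 c : R) : 0 < u0 -> 0 <= c ->
  sqrt (u0 ^ 2 + c) - u0 = c / (u0 + sqrt (u0 ^ 2 + c)).
Proof.
  intros Hu0 Hc.
  assert (HS : sqrt (u0 ^ 2 + c) ^ 2 = u0 ^ 2 + c) by (apply pow2_sqrt; nra).
  assert (0 <= sqrt (u0 ^ 2 + c)) by apply sqrt_pos.
  field_simplify_eq; [nra | lra].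
Qed.

Lemma div_add_sqrt_lt_sqrt (u0 c : R) : 0 < u0 -> 0 < c ->
  c / (u0 + sqrt (u0 ^ 2 + c)) < sqrt c.
Proof.
  intros Hu0 Hc.
  assert (HS : sqrt c < sqrt (u0 ^ 2 + c)) by (apply sqrt_lt_1_alt; nra).
  assert (Hc2 : sqrt c * sqrt c = c) by (apply sqrt_sqrt; lra).
  assert (0 < sqrt c) by (apply sqrt_lt_R0; lra).
  apply Rlt_div_l; nra.
Qed.

Section FirstIntegral.

Variables (kappa u0 Rm : R) (u du : R -> R).
Hypothesis hkappa : 0 < kappa.
Hypothesis hu0 : 0 < u0.
Hypothesis hderu : forall r, 0 < r < Rm -> is_derive u r (du r).
Hypothesis hode : forall r, 0 < r < Rm -> is_derive (sinpsi du) r (kappa * u r).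
Hypothesis hu_cont0 : filterlim u (at_right 0) (locally u0).
Hypothesis hdu_cont0 : filterlim du (at_right 0) (locally 0).

Definition energy (r : R) : R := kappa / 2 * u r ^ 2 + sqrt (1 - sinpsi du r ^ 2).

Lemma is_derive_energy (r : R) : 0 < r < Rm -> is_derive energy r 0.
Proof.
  intros Hr.
  assert (Hsq := sinpsi_sq_lt_1 du r).
  assert (Hw : 0 < sqrt (1 + du r ^ 2)) by (apply sqrt_lt_R0; nra).
  assert (Hpot : is_derive (fun t => kappa / 2 * u t ^ 2) r (kappa * u r * du r)).
  { replace (kappa * u r * du r) with (kappa / 2 * (INR 2 * du r * u r ^ pred 2))
      by (simpl; field).
    apply is_derive_scal, is_derive_pow, hderu, Hr. }
  assert (Hsin : is_derive (fun t => 1 - sinpsi du t ^ 2) r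
                   (minus zero (INR 2 * (kappa * u r) * sinpsi du r ^ pred 2))).
  { apply (is_derive_ext (fun t => minus 1 (sinpsi du t ^ 2))); [reflexivity |].
    exact (is_derive_minus _ _ r _ _ (is_derive_const 1 r)
             (is_derive_pow _ 2 r _ (hode r Hr))). }
  assert (Hcos : is_derive (fun t => sqrt (1 - sinpsi du t ^ 2)) r (- (kappa * u r * du r))).
  { replace (- (kappa * u r * du r))
      with (minus zero (INR 2 * (kappa * u r) * sinpsi du r ^ pred 2)
              / (2 * sqrt (1 - sinpsi du r ^ 2))).
    - apply (is_derive_sqrt (fun t => 1 - sinpsi du t ^ 2)); [exact Hsin | lra].
    - rewrite sqrt_1_minus_sinpsi_sq. unfold minus, plus, opp, zero, sinpsi; simpl.
      field. simpl in Hw. lra. }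
  replace 0 with (plus (kappa * u r * du r) (- (kappa * u r * du r)))
    by (unfold plus; simpl; ring).
  exact (is_derive_plus _ _ r _ _ Hpot Hcos).
Qed.

Lemma energy_at_right_0 : filterlim energy (at_right 0) (locally (kappa / 2 * u0 ^ 2 + 1)).
Proof.
  assert (Hpot : continuous (fun y => kappa / 2 * y ^ 2) u0).
  { apply (@ex_derive_continuous R_AbsRing R_NormedModule). auto_derive. auto. }
  assert (Hcos : filterlim (fun t => sqrt (1 - sinpsi du t ^ 2)) (at_right 0) (locally 1)).
  { replace (locally 1) with (locally (sqrt (1 - 0 ^ 2)))
      by (f_equal; replace (1 - 0 ^ 2) with 1 by ring; apply sqrt_1).
    exact (filterlim_comp _ _ _ (sinpsi du) (fun y => sqrt (1 - y ^ 2)) _ _ _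
             (filterlim_sinpsi _ du hdu_cont0) (continuous_sqrt_1_minus_sq 0)). }
  exact (filterlim_comp_2 _ _ Rplus (filterlim_comp _ _ _ _ _ _ _ _ hu_cont0 Hpot) Hcos
           (@filterlim_plus _ R_NormedModule _ _)).
Qed.

Lemma energy_eq (r : R) : 0 < r < Rm -> energy r = kappa / 2 * u0 ^ 2 + 1.
Proof.
  intros Hr.
  apply (eq_of_eventually_eq_lim (FF := at_right_proper_filter 0) energy);
    [| exact energy_at_right_0].
  apply (filter_imp (fun t => 0 < t < r)); [| apply at_right_interval; lra].
  intros t Ht. apply (const_of_derive_0 _ 0 Rm is_derive_energy); lra.
Qed.

Lemma u_sq_eq (r : R) : 0 < r < Rm ->
  u r ^ 2 = u0 ^ 2 + 2 / kappa * (1 - sqrt (1 - sinpsi du r ^ 2)).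
Proof.
  intros Hr. assert (H := energy_eq r Hr). unfold energy in H.
  field_simplify_eq; [nra | lra].
Qed.

Lemma u_pos (r : R) : 0 < r < Rm -> 0 < u r.
Proof.
  apply (pos_of_nonvanishing u Rm u0); [| | exact hu_cont0 | exact hu0].
  - intros t Ht. apply continuity_pt_filterlim.
    apply (@ex_derive_continuous R_AbsRing R_NormedModule).
    exists (du t). exact (hderu t Ht).
  - intros t Ht Hut.
    assert (Hs : sqrt (1 - sinpsi du t ^ 2) <= 1).
    { assert (H0 := pow2_ge_0 (sinpsi du t)).
      apply Rle_trans with (sqrt 1); [apply sqrt_le_1_alt; lra | rewrite sqrt_1; lra]. }
    assert (0 < 2 / kappa) by (apply Rdiv_lt_0_compat; lra).
    assert (Hsq := u_sq_eq t Ht). rewrite Hut in Hsq. nra.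
Qed.

Lemma u_eq_height (r : R) : 0 < r < Rm -> u r = height kappa u0 (sinpsi du r).
Proof.
  intros Hr. unfold height. rewrite <- u_sq_eq by exact Hr.
  symmetry. apply sqrt_pow2. left. exact (u_pos r Hr).
Qed.

End FirstIntegral.

Theorem mainTheorem7
  (kappa u0 Rm a gamma : R) (u du : R -> R)
  (hkappa : 0 < kappa) (hu0 : 0 < u0) (hRm : 0 < Rm)
  (* u solves (u'/sqrt(1+u'^2))' = kappa u on [0, Rm), u(0) = u0, u'(0) = 0 *)
  (hderu : forall r, 0 < r < Rm -> is_derive u r (du r))
  (hode : forall r, 0 < r < Rm -> is_derive (sinpsi du) r (kappa * u r))
  (hu_0 : u 0 = u0) (hdu_0 : du 0 = 0)
  (hu_cont0 : filterlim u (at_right 0) (locally u0))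
  (hdu_cont0 : filterlim du (at_right 0) (locally 0))
  (* maximality of [0, Rm): u' -> +oo as r -> Rm *)
  (hmax : filterlim du (at_left Rm) (Rbar_locally p_infty))
  (ha : 0 < a <= Rm) (hgamma : 0 <= gamma < PI / 2)
  (* contact angle gamma at the wall x = a: sin psi(a) = cos gamma,
     with sin psi extended continuously to r = a (needed when a = Rm) *)
  (hcontact_in : a < Rm -> sinpsi du a = cos gamma)
  (hcontact_end : a = Rm -> filterlim (sinpsi du) (at_left Rm) (locally (cos gamma))) :
  let c := 2 / kappa * (1 - sin gamma) in
  let q := c / (u0 + sqrt (u0 ^ 2 + c)) in
  (a < Rm -> u a - u 0 = q) /\
  (a = Rm -> filterlim u (at_left Rm) (locally (u 0 + q))) /\
  q < sqrt c.
Proof.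
  intros c q.
  assert (Hc : 0 < c).
  { assert (Hs := sin_acute_bounds gamma hgamma).
    apply Rmult_lt_0_compat; [apply Rdiv_lt_0_compat |]; lra. }
  assert (Hq : u 0 + q = height kappa u0 (cos gamma)).
  { rewrite height_cos, hu_0 by exact hgamma.
    change (u0 + q = sqrt (u0 ^ 2 + c)).
    unfold q. rewrite <- sqrt_sq_add_sub by lra. ring. }
  split; [| split].
  - intros Hlt.
    rewrite (u_eq_height kappa u0 Rm u du) by (auto; lra).
    rewrite hcontact_in by exact Hlt. lra.
  - intros Heq. rewrite Hq.
    apply filterlim_ext_loc with (f := fun t => height kappa u0 (sinpsi du t)).
    + apply (filter_imp (fun t => 0 < t < Rm)); [| exact (at_left_interval Rm 0 hRm)].
      intros t Ht. symmetry. apply (u_eq_height kappa u0 Rm); auto.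
    + eapply filterlim_comp; [exact (hcontact_end Heq) | apply continuous_height].
  - apply div_add_sqrt_lt_sqrt; assumption.
Qed.
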